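(* Let $G$ be an open localic groupoid and let $X_i$ be principal $G$-bundles over locales $M_i$, $i=1,2,3,4$. Suppose $\gamma_2:X_1\to X_2$, $\gamma_3:X_1\to X_3$, $\delta_2:X_2\to X_4$, $\delta_3:X_3\to X_4$ are equivariant maps with $\delta_2\circ\gamma_2=\delta_3\circ\gamma_3$, and let $\beta_2:M_1\to M_2$, $\beta_3:M_1\to M_3$, $\alpha_2:M_2\to M_4$, $\alpha_3:M_3\to M_4$ be the corresponding induced maps between the base locales (so $\alpha_2\circ\beta_2=\alpha_3\circ\beta_3$). Then the square formed by $\gamma_2,\gamma_3,\delta_2,\delta_3$ is a pullback in $\mathbf{Loc}$ if and only if the square formed by $\beta_2,\beta_3,\alpha_2,\alpha_3$ is a pullback in $\mathbf{Loc}$.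
   Context: An open localic groupoid $G$ has locales $G_0,G_1$ with structure maps, domain map $d$ open. A left $G$-locale is a locale $X$ with anchor $p:X\to G_0$ and associative unital action $a:G_1\times_{G_0}X\to X$; equivariant maps commute with anchors and actions. A principal $G$-bundle over $M$ is a $G$-locale with $\pi:X\to M$, $\pi\circ a=\pi\circ\pi_2$, $\langle a,\pi_2\rangle:G_1\times_{G_0}X\to X\times_MX$ an isomorphism and $\pi$ an open surjection; then $M\cong X/G$ (coequalizer of $a$ and $\pi_2$), and an equivariant map $f:X\to Y$ between principal bundles induces a map $f/G$ between base locales with $\pi_Y\circ f=(f/G)\circ\pi_X$. *)

Set Implicit Arguments.
Unset Strict Implicit.

Record Frame := {
  opens :> Type;
  fle : opens -> opens -> Prop;
  fle_refl : forall a, fle a a;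
  fle_trans : forall a b c, fle a b -> fle b c -> fle a c;
  fle_antisym : forall a b, fle a b -> fle b a -> a = b;
  fmeet : opens -> opens -> opens;
  ftop : opens;
  fsup : (opens -> Prop) -> opens;
  fmeet_l : forall a b, fle (fmeet a b) a;
  fmeet_r : forall a b, fle (fmeet a b) b;
  fmeet_glb : forall a b c, fle c a -> fle c b -> fle c (fmeet a b);
  ftop_max : forall a, fle a ftop;
  fsup_ub : forall (S : opens -> Prop) a, S a -> fle a (fsup S);
  fsup_lub : forall (S : opens -> Prop) b, (forall a, S a -> fle a b) -> fle (fsup S) b;
  fdistr : forall a (S : opens -> Prop),
      fmeet a (fsup S) = fsup (fun x => exists s, S s /\ x = fmeet a s)
}.

Notation Locale := Frame.

(* A locale map f : X -> Y is a frame homomorphism f^* : O(Y) -> O(X). *)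
Record LMap (X Y : Locale) := {
  finv :> Y -> X;
  finv_top : finv (ftop Y) = ftop X;
  finv_meet : forall u v, finv (fmeet u v) = fmeet (finv u) (finv v);
  finv_sup : forall S : Y -> Prop,
      finv (fsup S) = fsup (fun x => exists s, S s /\ x = finv s)
}.

Definition lid (X : Locale) : LMap X X.
Proof.
  refine {| finv := fun u => u |}; try reflexivity.
  intro S.
  apply (@fle_antisym X); apply (@fsup_lub X); intros a Ha.
  - apply (@fsup_ub X). exists a; split; auto.
  - destruct Ha as [s [Hs ->]]. apply (@fsup_ub X); auto.
Defined.

Definition lcomp (X Y Z : Locale) (g : LMap Y Z) (f : LMap X Y) : LMap X Z.
Proof.
  refine {| finv := fun w => f (g w) |}.
  - rewrite (finv_top g), (finv_top f); reflexivity.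
  - intros u v; rewrite (finv_meet g), (finv_meet f); reflexivity.
  - intro S. rewrite (finv_sup g), (finv_sup f).
    apply (@fle_antisym X); apply (@fsup_lub X); intros a Ha.
    + destruct Ha as [s [[t [Ht ->]] ->]].
      apply (@fsup_ub X). exists t; split; auto.
    + destruct Ha as [t [Ht ->]].
      apply (@fsup_ub X). exists (g t); split; auto. exists t; auto.
Defined.

Infix "\o" := lcomp (at level 40, left associativity).

Definition meq (X Y : Locale) (f g : LMap X Y) : Prop := forall u, f u = g u.
Infix "==L" := meq (at level 70).

Definition is_iso (X Y : Locale) (f : LMap X Y) : Prop :=
  exists g : LMap Y X, g \o f ==L lid X /\ f \o g ==L lid Y.

(* Pullback squares in Loc:
       P --p2--> B
       |         |
      p1         g
       v         v
       A --f-->  C                                                   *)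
Definition is_pullback (A B C P : Locale) (f : LMap A C) (g : LMap B C)
  (p1 : LMap P A) (p2 : LMap P B) : Prop :=
  f \o p1 ==L g \o p2 /\
  forall (Q : Locale) (q1 : LMap Q A) (q2 : LMap Q B),
    f \o q1 ==L g \o q2 ->
    exists h : LMap Q P, p1 \o h ==L q1 /\ p2 \o h ==L q2 /\
      forall h' : LMap Q P, p1 \o h' ==L q1 -> p2 \o h' ==L q2 -> h' ==L h.

(* f is open iff f^* has a left adjoint f_! satisfying Frobenius reciprocity. *)
Definition is_open_map (X Y : Locale) (f : LMap X Y) : Prop :=
  exists fsh : X -> Y,
    (forall a b, @fle Y (fsh a) b <-> @fle X a (f b)) /\
    (forall a b, fsh (fmeet a (f b)) = fmeet (fsh a) b).

Definition is_surjection (X Y : Locale) (f : LMap X Y) : Prop :=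
  forall u v, f u = f v -> u = v.

Definition is_open_surjection (X Y : Locale) (f : LMap X Y) : Prop :=
  is_open_map f /\ is_surjection f.

(* ---------- Open localic groupoids ----------
   Composable pairs (g,h) satisfy d g = c h; G2 = G1 x_{G0} G1 is a chosen
   pullback of d and c with projections pr1, pr2, and m : G2 -> G1 is the
   multiplication (g,h) |-> g h.  The axioms are stated on generalized elements
   (maps from arbitrary locales Q), which is the usual internal formulation. *)
Record OpenLocGroupoid := {
  G0 : Locale;
  G1 : Locale;
  gd : LMap G1 G0;
  gc : LMap G1 G0;
  ge : LMap G0 G1;
  gi : LMap G1 G1;
  G2 : Locale;
  gpr1 : LMap G2 G1;
  gpr2 : LMap G2 G1;
  G2_pb : is_pullback gd gc gpr1 gpr2;
  gm : LMap G2 G1;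
  gd_e : gd \o ge ==L lid G0;
  gc_e : gc \o ge ==L lid G0;
  gd_i : gd \o gi ==L gc;
  gc_i : gc \o gi ==L gd;
  gd_m : gd \o gm ==L gd \o gpr2;
  gc_m : gc \o gm ==L gc \o gpr1;
  gm_unit_l : forall (Q : Locale) (x : LMap Q G1) (h : LMap Q G2),
      gpr1 \o h ==L ge \o (gc \o x) -> gpr2 \o h ==L x -> gm \o h ==L x;
  gm_unit_r : forall (Q : Locale) (x : LMap Q G1) (h : LMap Q G2),
      gpr1 \o h ==L x -> gpr2 \o h ==L ge \o (gd \o x) -> gm \o h ==L x;
  gm_inv_r : forall (Q : Locale) (x : LMap Q G1) (h : LMap Q G2),
      gpr1 \o h ==L x -> gpr2 \o h ==L gi \o x -> gm \o h ==L ge \o (gc \o x);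
  gm_inv_l : forall (Q : Locale) (x : LMap Q G1) (h : LMap Q G2),
      gpr1 \o h ==L gi \o x -> gpr2 \o h ==L x -> gm \o h ==L ge \o (gd \o x);
  gm_assoc : forall (Q : Locale) (x y z : LMap Q G1) (h12 h23 ha hb : LMap Q G2),
      gpr1 \o h12 ==L x -> gpr2 \o h12 ==L y ->
      gpr1 \o h23 ==L y -> gpr2 \o h23 ==L z ->
      gpr1 \o ha ==L gm \o h12 -> gpr2 \o ha ==L z ->
      gpr1 \o hb ==L x -> gpr2 \o hb ==L gm \o h23 ->
      gm \o ha ==L gm \o hb;
  gd_open : is_open_map gd
}.

Record GLocale (G : OpenLocGroupoid) := {
  gX : Locale;
  anchor : LMap gX (G0 G);
  actdom : Locale;
  aq1 : LMap actdom (G1 G);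
  aq2 : LMap actdom gX;
  actdom_pb : is_pullback (gd G) anchor aq1 aq2;
  act : LMap actdom gX;
  anchor_act : anchor \o act ==L gc G \o aq1;
  act_unit : forall (Q : Locale) (x : LMap Q gX) (h : LMap Q actdom),
      aq1 \o h ==L ge G \o (anchor \o x) -> aq2 \o h ==L x -> act \o h ==L x;
  act_assoc : forall (Q : Locale) (g1 g2 : LMap Q (G1 G)) (x : LMap Q gX)
      (n : LMap Q (G2 G)) (h k l : LMap Q actdom),
      gpr1 G \o n ==L g1 -> gpr2 G \o n ==L g2 ->
      aq1 \o h ==L g2 -> aq2 \o h ==L x ->
      aq1 \o k ==L g1 -> aq2 \o k ==L act \o h ->
      aq1 \o l ==L gm G \o n -> aq2 \o l ==L x ->
      act \o k ==L act \o l
}.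

(* Equivariant maps: commute with anchors and actions.  The map
   id x f : G1 x_{G0} X -> G1 x_{G0} Y is any map with the right projections
   (it is unique by the pullback property). *)
Definition equivariant (G : OpenLocGroupoid) (X Y : GLocale G)
  (f : LMap (gX X) (gX Y)) : Prop :=
  anchor Y \o f ==L anchor X /\
  forall k : LMap (actdom X) (actdom Y),
    aq1 Y \o k ==L aq1 X -> aq2 Y \o k ==L f \o aq2 X ->
    f \o act X ==L act Y \o k.

Record PrincipalBundle (G : OpenLocGroupoid) (X : GLocale G) (M : Locale) := {
  bpi : LMap (gX X) M;
  bpi_inv : bpi \o act X ==L bpi \o aq2 X;
  kerpair : Locale;
  bk1 : LMap kerpair (gX X);
  bk2 : LMap kerpair (gX X);
  kerpair_pb : is_pullback bpi bpi bk1 bk2;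
  bprincipal : exists t : LMap (actdom X) kerpair,
      bk1 \o t ==L act X /\ bk2 \o t ==L aq2 X /\ is_iso t;
  bpi_opensurj : is_open_surjection bpi
}.

(* An equivariant map f : X -> Y of principal G-bundles over phi : M -> N makes
   the square (f, phi) a pullback.  After base change along the open surjection
   X -> M a cone lifts through f because the fibres of Y -> N are single
   G-orbits; the lift is unique because the action is free; and it descends
   because open surjections are effective descent morphisms (Beck-Chevalley for
   the kernel pair).  So all vertical faces of the cube X_i -> M_i are
   pullbacks.  If the base square is a pullback, pasting gives the top square.
   Conversely, a cone over the base square lifts to the top square after base
   change along the open surjection X4 -> M4, and the induced map descends. *)

From Stdlib Require Import Setoid FunctionalExtensionality PropExtensionality ProofIrrelevance.
Set Implicit Arguments.
Unset Strict Implicit.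

Ltac solve_fle := solve [ assumption | apply fle_refl | apply ftop_max
  | apply fmeet_glb; solve_fle
  | eapply fle_trans; [apply fmeet_l | solve_fle]
  | eapply fle_trans; [apply fmeet_r | solve_fle] ].

Section FrameFacts.
Variable X : Frame.

Lemma fmeet_top_r (a : X) : fmeet a (ftop X) = a.
Proof. apply fle_antisym; solve_fle. Qed.

Lemma fmeet_eq_l (a b : X) : fle a b -> fmeet a b = a.
Proof. intro; apply fle_antisym; solve_fle. Qed.

Lemma fsup_ext (S T : X -> Prop) : (forall x, S x <-> T x) -> fsup S = fsup T.
Proof.
  intro H; apply fle_antisym; apply fsup_lub; intros a Ha; apply fsup_ub, H; auto.
Qed.

Lemma fmeet_fsup_le (x w : X) (S : X -> Prop) :
  (forall s, S s -> fle (fmeet x s) w) -> fle (fmeet x (fsup S)) w.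
Proof. intro H. rewrite fdistr. apply fsup_lub. intros a [s [Hs ->]]. auto. Qed.

Lemma fsup_fmeet_le (x w : X) (S : X -> Prop) :
  (forall s, S s -> fle (fmeet s x) w) -> fle (fmeet (fsup S) x) w.
Proof.
  intro H. eapply fle_trans; [| apply (fmeet_fsup_le (x := x))].
  - apply fmeet_glb; [apply fmeet_r | apply fmeet_l].
  - intros s Hs. eapply fle_trans; [| apply (H s Hs)]. solve_fle.
Qed.
End FrameFacts.

Lemma finv_mono (X Y : Locale) (f : LMap X Y) (u v : Y) : fle u v -> fle (f u) (f v).
Proof. intro H. rewrite <- (fmeet_eq_l H), finv_meet. apply fmeet_r. Qed.

(** * Pullbacks of locales *)

(* The frame of opens of [A x_C B] is the tensor product [O(A) (x)_{O(C)} O(B)]: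
   downsets of [O(A) x O(B)] closed under joins in each variable and under
   moving [f c] and [g c] across the pair.  Only the commuting square and the
   openness of the first projection are used below, not the universal property. *)
Section Pullback.
Variables (A B C : Locale) (f : LMap A C) (g : LMap B C).

Definition downset (D : A -> B -> Prop) : Prop :=
  forall a b a' b', D a b -> fle a' a -> fle b' b -> D a' b'.

Record saturated (D : A -> B -> Prop) : Prop := {
  sat_down : downset D;
  sat_supl : forall (S : A -> Prop) b, (forall s, S s -> D s b) -> D (fsup S) b;
  sat_supr : forall a (S : B -> Prop), (forall s, S s -> D a s) -> D a (fsup S);
  sat_fg : forall a b c, D (fmeet a (f c)) b -> D a (fmeet b (g c));
  sat_gf : forall a b c, D a (fmeet b (g c)) -> D (fmeet a (f c)) b
}.

Record pb_open := mk_pb_open { pb_rel : A -> B -> Prop; pb_sat : saturated pb_rel }.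

Lemma pb_open_ext (D E : pb_open) : (forall a b, pb_rel D a b <-> pb_rel E a b) -> D = E.
Proof.
  destruct D as [d hd], E as [e he]; simpl; intro H.
  assert (d = e) as <- by (do 2 (apply functional_extensionality; intro);
                            apply propositional_extensionality; auto).
  f_equal. apply proof_irrelevance.
Qed.

Definition closure (U : A -> B -> Prop) : A -> B -> Prop :=
  fun a b => forall E, saturated E -> (forall x y, U x y -> E x y) -> E a b.

Lemma closure_sat U : saturated (closure U).
Proof.
  split.
  - intros a b a' b' H h1 h2 E HE HU. apply (sat_down HE) with a b; auto. apply H; auto.
  - intros S b H E HE HU. apply (sat_supl HE). intros s Hs. apply H; auto.
  - intros a S H E HE HU. apply (sat_supr HE). intros s Hs. apply H; auto.
  - intros a b c H E HE HU. apply (sat_fg HE). apply H; auto.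
  - intros a b c H E HE HU. apply (sat_gf HE). apply H; auto.
Qed.

Lemma closure_incl (U : A -> B -> Prop) a b : U a b -> closure U a b.
Proof. intros H E HE HU; auto. Qed.

Lemma closure_min (U E : A -> B -> Prop) : saturated E -> (forall x y, U x y -> E x y) ->
  forall a b, closure U a b -> E a b.
Proof. intros HE HU a b H; apply H; auto. Qed.

Lemma closure_mono (U V : A -> B -> Prop) : (forall x y, U x y -> V x y) ->
  forall a b, closure U a b -> closure V a b.
Proof. intro HUV. apply closure_min; [apply closure_sat|]. intros; apply closure_incl; auto. Qed.

(* The relative pseudo-complement [D => T]: the tool for pushing closures
   through meets. *)
Definition rel_imp (D T : A -> B -> Prop) : A -> B -> Prop :=
  fun a b => forall a' b', fle a' a -> fle b' b -> D a' b' -> T a' b'.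

Lemma rel_imp_sat D T : downset D -> saturated T -> saturated (rel_imp D T).
Proof.
  intros HD HT. split.
  - intros a b a' b' H h1 h2 a'' b'' k1 k2 Hd. apply H; auto; eapply fle_trans; eauto.
  - intros S b H a' b' h1 h2 Hd.
    rewrite <- (fmeet_eq_l h1), fdistr.
    apply (sat_supl HT). intros x [s [Hs ->]].
    apply (H s Hs); [apply fmeet_r | auto |].
    apply HD with a' b'; auto; [apply fmeet_l | apply fle_refl].
  - intros a S H a' b' h1 h2 Hd.
    rewrite <- (fmeet_eq_l h2), fdistr.
    apply (sat_supr HT). intros x [s [Hs ->]].
    apply (H s Hs); [auto | apply fmeet_r |].
    apply HD with a' b'; auto; [apply fle_refl | apply fmeet_l].
  - intros a b c H a' b' h1 h2 Hd.
    rewrite <- (fmeet_eq_l (a := b') (b := g c)) by (eapply fle_trans; [exact h2 | apply fmeet_r]).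
    apply (sat_fg HT), H.
    + apply fmeet_glb; [eapply fle_trans; [apply fmeet_l | exact h1] | apply fmeet_r].
    + eapply fle_trans; [exact h2 | apply fmeet_l].
    + apply HD with a' b'; auto; [apply fmeet_l | apply fle_refl].
  - intros a b c H a' b' h1 h2 Hd.
    rewrite <- (fmeet_eq_l (a := a') (b := f c)) by (eapply fle_trans; [exact h1 | apply fmeet_r]).
    apply (sat_gf HT), H.
    + eapply fle_trans; [exact h1 | apply fmeet_l].
    + apply fmeet_glb; [eapply fle_trans; [apply fmeet_l | exact h2] | apply fmeet_r].
    + apply HD with a' b'; auto; [apply fle_refl | apply fmeet_l].
Qed.

Lemma closure_meet (U V : A -> B -> Prop) : downset U -> downset V ->
  forall a b, closure U a b -> closure V a b -> closure (fun x y => U x y /\ V x y) a b.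
Proof.
  intros HU HV.
  set (T := closure (fun x y => U x y /\ V x y)).
  assert (HVT : forall a b, closure V a b -> rel_imp U T a b).
  { apply closure_min; [apply rel_imp_sat; auto; apply closure_sat |].
    intros x y Hv a' b' h1 h2 Hu. apply closure_incl. split; auto. apply HV with x y; auto. }
  assert (HUT : forall a b, closure U a b -> rel_imp (closure V) T a b).
  { apply closure_min; [apply rel_imp_sat; [apply sat_down, closure_sat | apply closure_sat] |].
    intros x y Hu a' b' h1 h2 Hv. apply (HVT _ _ Hv); try apply fle_refl.
    apply HU with x y; auto. }
  intros a b Ha Hb. apply (HUT _ _ Ha); auto; apply fle_refl.
Qed.

Lemma meet_sat D E : saturated D -> saturated E -> saturated (fun a b => D a b /\ E a b).
Proof.
  intros HD HE. split.
  - intros a b a' b' [H1 H2] h1 h2.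
    split; [apply (sat_down HD) with a b | apply (sat_down HE) with a b]; auto.
  - intros S b H; split; [apply (sat_supl HD) | apply (sat_supl HE)]; intros s Hs; apply H; auto.
  - intros a S H; split; [apply (sat_supr HD) | apply (sat_supr HE)]; intros s Hs; apply H; auto.
  - intros a b c [H1 H2]; split; [apply (sat_fg HD) | apply (sat_fg HE)]; auto.
  - intros a b c [H1 H2]; split; [apply (sat_gf HD) | apply (sat_gf HE)]; auto.
Qed.

Lemma top_sat : saturated (fun _ _ => True).
Proof. split; repeat intro; exact I. Qed.

Definition pb_le (D E : pb_open) := forall a b, pb_rel D a b -> pb_rel E a b.
Definition pb_meet (D E : pb_open) : pb_open := mk_pb_open (meet_sat (pb_sat D) (pb_sat E)).
Definition pb_top : pb_open := mk_pb_open top_sat.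
Definition pb_sup (S : pb_open -> Prop) : pb_open :=
  mk_pb_open (closure_sat (fun a b => exists D, S D /\ pb_rel D a b)).

Lemma pb_distr (D : pb_open) (S : pb_open -> Prop) :
  pb_meet D (pb_sup S) = pb_sup (fun x => exists s, S s /\ x = pb_meet D s).
Proof.
  apply pb_open_ext; intros a b; simpl; split.
  - intros [Hd Hs].
    set (T := closure (fun x y => exists D0, (exists s, S s /\ D0 = pb_meet D s) /\ pb_rel D0 x y)).
    assert (K : forall a b, closure (fun x y => exists D0, S D0 /\ pb_rel D0 x y) a b ->
                            rel_imp (pb_rel D) T a b).
    { apply closure_min; [apply rel_imp_sat; [apply sat_down, pb_sat | apply closure_sat] |].
      intros x y [s [Hs' Hxy]] a' b' h1 h2 Hd'. apply closure_incl.
      exists (pb_meet D s). split; [exists s; auto |]. simpl. split; auto.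
      apply (sat_down (pb_sat s)) with x y; auto. }
    apply (K _ _ Hs); auto; apply fle_refl.
  - apply (closure_min (E := fun x y => _ /\ _) (meet_sat (pb_sat D) (closure_sat _))).
    intros x y [D0 [[s [Hs ->]] [H1 H2]]]. split; auto. apply closure_incl. exists s; auto.
Qed.

Definition pb_frame : Locale.
Proof.
  refine {| opens := pb_open; fle := pb_le; fmeet := pb_meet; ftop := pb_top; fsup := pb_sup |}.
  - intros a x y H; exact H.
  - intros a b c H1 H2 x y H; auto.
  - intros a b H1 H2; apply pb_open_ext; split; auto.
  - intros a b x y [H _]; exact H.
  - intros a b x y [_ H]; exact H.
  - intros a b c H1 H2 x y H; split; auto.
  - intros a x y _; exact I.
  - intros S a H x y Hxy. apply closure_incl. exists a; auto.
  - intros S b H x y Hxy. simpl in Hxy. revert Hxy. apply closure_min; [apply pb_sat |].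
    intros x' y' [D [HD HH]]. apply (H D HD); auto.
  - apply pb_distr.
Defined.

Definition pb_rect (a : A) (b : B) : pb_frame :=
  mk_pb_open (closure_sat (fun x y => fle x a /\ fle y b)).

Lemma pb_rect_meet a b a' b' :
  @fmeet pb_frame (pb_rect a b) (pb_rect a' b') = pb_rect (fmeet a a') (fmeet b b').
Proof.
  apply pb_open_ext; intros x y; simpl; split.
  - intros [H1 H2]. eapply closure_mono; [| apply closure_meet; [| | exact H1 | exact H2]].
    + intros u v [[k1 k2] [k3 k4]]. split; apply fmeet_glb; auto.
    + intros u v u' v' [k1 k2] h1 h2; split; eapply fle_trans; eauto.
    + intros u v u' v' [k1 k2] h1 h2; split; eapply fle_trans; eauto.
  - intros H; split; eapply closure_mono; try exact H; intros u v [k1 k2]; split;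
      (eapply fle_trans; [eassumption |]); solve_fle.
Qed.

Lemma pb_rect_supl (S : A -> Prop) b :
  pb_rect (fsup S) b = @fsup pb_frame (fun x => exists s, S s /\ x = pb_rect s b).
Proof.
  apply pb_open_ext; intros x y; simpl; split.
  - apply closure_min; [apply closure_sat |]. intros u v [h1 h2].
    apply (sat_down (closure_sat _)) with (fsup S) b; auto.
    apply (sat_supl (closure_sat _)). intros s Hs. apply closure_incl.
    exists (pb_rect s b). split; [exists s; auto |]. apply closure_incl; split; apply fle_refl.
  - apply closure_min; [apply (pb_sat (pb_rect (fsup S) b)) |].
    intros u v [D [[s [Hs ->]] HH]]. eapply closure_mono; [| exact HH].
    intros u' v' [k1 k2]; split; auto. eapply fle_trans; [exact k1 | apply fsup_ub; auto].
Qed.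

Lemma pb_rect_supr a (S : B -> Prop) :
  pb_rect a (fsup S) = @fsup pb_frame (fun x => exists s, S s /\ x = pb_rect a s).
Proof.
  apply pb_open_ext; intros x y; simpl; split.
  - apply closure_min; [apply closure_sat |]. intros u v [h1 h2].
    apply (sat_down (closure_sat _)) with a (fsup S); auto.
    apply (sat_supr (closure_sat _)). intros s Hs. apply closure_incl.
    exists (pb_rect a s). split; [exists s; auto |]. apply closure_incl; split; apply fle_refl.
  - apply closure_min; [apply (pb_sat (pb_rect a (fsup S))) |].
    intros u v [D [[s [Hs ->]] HH]]. eapply closure_mono; [| exact HH].
    intros u' v' [k1 k2]; split; auto. eapply fle_trans; [exact k2 | apply fsup_ub; auto].
Qed.

Lemma pb_rect_top : pb_rect (ftop A) (ftop B) = ftop pb_frame.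
Proof.
  apply pb_open_ext; intros x y; simpl; split; auto.
  intros _. apply closure_incl; split; apply ftop_max.
Qed.

Definition pb_pr1 : LMap pb_frame A.
Proof.
  refine {| finv := fun a => pb_rect a (ftop B) |}.
  - apply pb_rect_top.
  - intros u v. rewrite pb_rect_meet, fmeet_top_r. reflexivity.
  - intros S. apply pb_rect_supl.
Defined.

Definition pb_pr2 : LMap pb_frame B.
Proof.
  refine {| finv := fun b => pb_rect (ftop A) b |}.
  - apply pb_rect_top.
  - intros u v. rewrite pb_rect_meet, fmeet_top_r. reflexivity.
  - intros S. apply pb_rect_supr.
Defined.

Lemma pb_comm : f \o pb_pr1 ==L g \o pb_pr2.
Proof.
  intro c. apply pb_open_ext; intros x y; simpl; split.
  - apply closure_min; [apply closure_sat |]. intros u v [h1 h2].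
    apply (sat_down (closure_sat _)) with (fmeet (ftop A) (f c)) v; [| | apply fle_refl].
    + apply (sat_gf (closure_sat _)). apply closure_incl. split; [apply fle_refl | apply fmeet_r].
    + apply fmeet_glb; auto; apply ftop_max.
  - apply closure_min; [apply closure_sat |]. intros u v [h1 h2].
    apply (sat_down (closure_sat _)) with u (fmeet (ftop B) (g c)); [| apply fle_refl |].
    + apply (sat_fg (closure_sat _)). apply closure_incl. split; [apply fmeet_r | apply fle_refl].
    + apply fmeet_glb; auto; apply ftop_max.
Qed.

Section OpenProjection.
Variable g_sh : B -> C.
Hypothesis g_adj : forall b c, fle (g_sh b) c <-> fle b (g c).
Hypothesis g_frob : forall b c, g_sh (fmeet b (g c)) = fmeet (g_sh b) c.

Lemma g_sh_unit b : fle b (g (g_sh b)).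
Proof. apply g_adj, fle_refl. Qed.

Lemma g_sh_mono b b' : fle b b' -> fle (g_sh b) (g_sh b').
Proof. intro; apply g_adj. eapply fle_trans; [eassumption | apply g_sh_unit]. Qed.

Lemma below_image_sat w : saturated (fun a b => fle (fmeet a (f (g_sh b))) w).
Proof.
  split.
  - intros a b a' b' H h1 h2. eapply fle_trans; [| exact H].
    apply fmeet_glb; [eapply fle_trans; [apply fmeet_l | auto]
                     |eapply fle_trans; [apply fmeet_r | apply finv_mono, g_sh_mono; auto]].
  - intros S b H. apply fsup_fmeet_le. auto.
  - intros a S H. eapply fle_trans.
    + apply fmeet_glb; [apply fmeet_l |]. eapply fle_trans; [apply fmeet_r |].
      apply finv_mono, (g_adj (fsup S) (fsup (fun y => exists s, S s /\ y = g_sh s))).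
      apply fsup_lub. intros s Hs. eapply fle_trans; [apply g_sh_unit |].
      apply finv_mono, fsup_ub. exists s; auto.
    + rewrite finv_sup. apply fmeet_fsup_le. intros x [y [[s [Hs ->]] ->]]. auto.
  - intros a b c H. eapply fle_trans; [| exact H]. rewrite g_frob, finv_meet. solve_fle.
  - intros a b c H. eapply fle_trans; [| exact H]. rewrite g_frob, finv_meet. solve_fle.
Qed.

Definition pb_pr1_sh (D : pb_frame) : A :=
  fsup (fun x => exists a b, pb_rel D a b /\ x = fmeet a (f (g_sh b))).

Lemma pb_pr1_sh_adj (D : pb_frame) w : fle (pb_pr1_sh D) w <-> fle D (pb_pr1 w).
Proof.
  split.
  - intros H a b Hab. simpl.
    apply (sat_down (closure_sat _)) with a (fmeet b (g (g_sh b))).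
    + apply (sat_fg (closure_sat _)). apply closure_incl. split; [| apply ftop_max].
      eapply fle_trans; [| exact H]. apply fsup_ub. exists a, b; auto.
    + apply fle_refl.
    + apply fmeet_glb; [apply fle_refl | apply g_sh_unit].
  - intros H. apply fsup_lub. intros x [a [b [Hab ->]]].
    specialize (H a b Hab). simpl in H. revert H.
    apply (closure_min (below_image_sat w)).
    intros u v [h1 h2]. eapply fle_trans; [apply fmeet_l | auto].
Qed.

Lemma pb_pr1_open : is_open_map pb_pr1.
Proof.
  exists pb_pr1_sh. split; [intros; apply pb_pr1_sh_adj |].
  intros D w. apply fle_antisym.
  - apply fmeet_glb.
    + apply fsup_lub. intros x [a [b [[Hab _] ->]]]. apply fsup_ub. exists a, b; auto.
    + apply pb_pr1_sh_adj. intros a b [_ H]; exact H.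
  - apply fsup_fmeet_le. intros s [a [b [Hab ->]]].
    eapply fle_trans; [| apply fsup_ub; exists (fmeet a w), b; split; [| reflexivity]].
    + solve_fle.
    + split; [apply (sat_down (pb_sat D)) with a b; auto; [apply fmeet_l | apply fle_refl] |].
      apply closure_incl. split; [apply fmeet_r | apply ftop_max].
Qed.

Hypothesis g_sh_top : g_sh (ftop B) = ftop C.

Lemma pb_pr1_surj : is_surjection pb_pr1.
Proof.
  assert (K : forall u, pb_pr1_sh (pb_pr1 u) = u).
  { intro u. apply fle_antisym.
    - apply pb_pr1_sh_adj. intros x y H; exact H.
    - eapply fle_trans; [| apply fsup_ub; exists u, (ftop B); split; [| reflexivity]].
      + rewrite g_sh_top, finv_top. solve_fle.
      + apply closure_incl; split; apply fle_refl. }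
  intros u v E. rewrite <- (K u), <- (K v), E. reflexivity.
Qed.
End OpenProjection.
End Pullback.

Lemma open_surj_sh_top (X Y : Locale) (p : LMap X Y) (p_sh : X -> Y) :
  (forall a b, fle (p_sh a) b <-> fle a (p b)) -> is_surjection p -> p_sh (ftop X) = ftop Y.
Proof.
  intros Hadj Hs. apply Hs, fle_antisym; rewrite finv_top; [apply ftop_max | apply Hadj, fle_refl].
Qed.

Lemma pb_pr1_open_surjection (A B C : Locale) (f : LMap A C) (g : LMap B C) :
  is_open_surjection g -> is_open_surjection (pb_pr1 f g).
Proof.
  intros [[g_sh [Hadj Hfrob]] Hs]. split.
  - apply pb_pr1_open with g_sh; auto.
  - apply pb_pr1_surj with g_sh; auto. apply open_surj_sh_top with g; auto.
Qed.

(** * Descent along open surjections *)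

Section Descent.
Variables (P A : Locale) (p : LMap P A) (p_sh : P -> A).
Hypothesis p_adj : forall a b, fle (p_sh a) b <-> fle a (p b).
Hypothesis p_frob : forall a b, p_sh (fmeet a (p b)) = fmeet (p_sh a) b.
Hypothesis p_surj : is_surjection p.

(* Beck-Chevalley for the kernel pair of the open map [p]. *)
Lemma kernel_pair_invariant_open u : pb_pr1 p p u = pb_pr2 p p u -> p (p_sh u) = u.
Proof.
  intro E. apply fle_antisym; [| apply p_adj, fle_refl].
  assert (H : pb_rel (pb_pr2 p p u) (ftop P) u) by (apply closure_incl; split; apply fle_refl).
  rewrite <- E in H. simpl in H.
  eapply fle_trans; [| apply (closure_min (below_image_sat p p_adj p_frob u)) with (2 := H)].
  - apply fmeet_glb; [apply ftop_max | apply fle_refl].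
  - intros x y [h1 h2]. eapply fle_trans; [apply fmeet_l | exact h1].
Qed.

Section Descend.
Variables (Z : Locale) (x : LMap P Z).
Hypothesis x_kernel : x \o pb_pr1 p p ==L x \o pb_pr2 p p.

Lemma descend_fixed z : p (p_sh (x z)) = x z.
Proof. apply kernel_pair_invariant_open, x_kernel. Qed.

Definition descend : LMap A Z.
Proof.
  refine {| finv := fun z => p_sh (x z) |}.
  - apply p_surj. rewrite descend_fixed, !finv_top. reflexivity.
  - intros u v. apply p_surj. rewrite descend_fixed, !finv_meet, !descend_fixed. reflexivity.
  - intros S. apply p_surj. rewrite descend_fixed, !finv_sup. apply fsup_ext. intros y; split.
    + intros [s [Hs ->]]. exists (p_sh (x s)). split; [exists s; auto |].
      rewrite descend_fixed; reflexivity.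
    + intros [y' [[s [Hs ->]] ->]]. exists s. rewrite descend_fixed; auto.
Defined.

Lemma descend_comp : descend \o p ==L x.
Proof. intro z. apply descend_fixed. Qed.
End Descend.
End Descent.

Lemma open_surjection_descent (P A Z : Locale) (p : LMap P A) (x : LMap P Z) :
  is_open_surjection p ->
  (forall W (a b : LMap W P), p \o a ==L p \o b -> x \o a ==L x \o b) ->
  exists y : LMap A Z, y \o p ==L x.
Proof.
  intros [[p_sh [Hadj Hfrob]] Hs] Hx.
  exists (descend Hadj Hfrob Hs (Hx _ _ _ (pb_comm p p))). apply descend_comp.
Qed.

Add Parametric Relation (X Y : Locale) : (LMap X Y) (@meq X Y)
  reflexivity proved by (fun f u => eq_refl)
  symmetry proved by (fun f g H u => eq_sym (H u))
  transitivity proved by (fun f g h H1 H2 u => eq_trans (H1 u) (H2 u))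
  as meq_rel.

(* Composition is strictly associative on inverse-image maps, so [==L]-goals
   are best checked on a generic open [u], where the hypotheses rewrite. *)
Ltac pointwise := let u := fresh "u" in intro u; unfold meq in *; simpl in *.

Lemma surjection_cancel (X Y Z : Locale) (p : LMap X Y) (a b : LMap Y Z) :
  is_surjection p -> a \o p ==L b \o p -> a ==L b.
Proof. intros Hs H u. apply Hs, H. Qed.

Section PullbackSquares.
Variables (A B C P : Locale) (f : LMap A C) (g : LMap B C) (p1 : LMap P A) (p2 : LMap P B).

Lemma pullback_lift : is_pullback f g p1 p2 -> forall Q (q1 : LMap Q A) (q2 : LMap Q B),
  f \o q1 ==L g \o q2 -> exists h, p1 \o h ==L q1 /\ p2 \o h ==L q2.
Proof. intros [_ H] Q q1 q2 Hq. destruct (H Q q1 q2 Hq) as [h [H1 [H2 _]]]. eauto. Qed.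

Lemma pullback_jointly_mono : is_pullback f g p1 p2 -> forall Q (h h' : LMap Q P),
  p1 \o h ==L p1 \o h' -> p2 \o h ==L p2 \o h' -> h ==L h'.
Proof.
  intros [Hc H] Q h h' E1 E2.
  assert (Hq : f \o (p1 \o h) ==L g \o (p2 \o h)) by (pointwise; rewrite Hc; reflexivity).
  destruct (H Q _ _ Hq) as [h0 [_ [_ U]]].
  transitivity h0; [| symmetry]; apply U; try reflexivity; symmetry; assumption.
Qed.

Lemma is_pullbackI :
  f \o p1 ==L g \o p2 ->
  (forall Q (h h' : LMap Q P), p1 \o h ==L p1 \o h' -> p2 \o h ==L p2 \o h' -> h ==L h') ->
  (forall Q (q1 : LMap Q A) (q2 : LMap Q B),
      f \o q1 ==L g \o q2 -> exists h, p1 \o h ==L q1 /\ p2 \o h ==L q2) ->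
  is_pullback f g p1 p2.
Proof.
  intros Hc Hmono Hlift. split; [exact Hc |].
  intros Q q1 q2 Hq. destruct (Hlift Q q1 q2 Hq) as [h [H1 H2]].
  exists h. split; [exact H1 | split; [exact H2 |]].
  intros h' H1' H2'. apply Hmono; etransitivity; eauto; symmetry; assumption.
Qed.
End PullbackSquares.

Lemma open_surjection_lift_locally (X M Q : Locale) (pi : LMap X M) (q : LMap Q M) :
  is_open_surjection pi ->
  exists (P : Locale) (p : LMap P Q) (z : LMap P X), is_open_surjection p /\ q \o p ==L pi \o z.
Proof.
  intro Hpi. exists (pb_frame q pi), (pb_pr1 q pi), (pb_pr2 q pi).
  split; [apply pb_pr1_open_surjection; exact Hpi | apply pb_comm].
Qed.

(** * Principal bundles *)

Section Bundles.
Variable G : OpenLocGroupoid.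

Lemma act_pair_exists (X : GLocale G) W (g : LMap W (G1 G)) (x : LMap W (gX X)) :
  gd G \o g ==L anchor X \o x -> exists k, aq1 X \o k ==L g /\ aq2 X \o k ==L x.
Proof. apply (pullback_lift (actdom_pb X)). Qed.

Lemma equivariant_act (X Y : GLocale G) (f : LMap (gX X) (gX Y)) (Hf : equivariant f)
  W (kX : LMap W (actdom X)) (kY : LMap W (actdom Y)) :
  aq1 Y \o kY ==L aq1 X \o kX -> aq2 Y \o kY ==L f \o aq2 X \o kX ->
  f \o act X \o kX ==L act Y \o kY.
Proof.
  intros H1 H2. destruct Hf as [Hanchor Hact].
  assert (Hc : gd G \o aq1 X ==L anchor Y \o (f \o aq2 X)).
  { pose proof (proj1 (actdom_pb X)) as E. pointwise. rewrite E, Hanchor. reflexivity. }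
  destruct (pullback_lift (actdom_pb Y) Hc) as [K [K1 K2]].
  assert (HK : K \o kX ==L kY).
  { apply (pullback_jointly_mono (actdom_pb Y)); pointwise;
      [rewrite K1, H1 | rewrite K2, H2]; reflexivity. }
  pose proof (Hact K K1 K2) as E. pointwise. rewrite E, HK. reflexivity.
Qed.

Section Principal.
Variables (X : GLocale G) (M : Locale) (PX : PrincipalBundle X M).

Lemma principal_fiber_transitive W (x y : LMap W (gX X)) :
  bpi PX \o x ==L bpi PX \o y -> exists k, act X \o k ==L x /\ aq2 X \o k ==L y.
Proof.
  intro H. destruct (pullback_lift (kerpair_pb PX) H) as [j [J1 J2]].
  destruct (bprincipal PX) as [t [T1 [T2 [s [S1 S2]]]]].
  exists (s \o j); split; pointwise.
  - rewrite <- T1, S2, J1. reflexivity.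
  - rewrite <- T2, S2, J2. reflexivity.
Qed.

Lemma act_pair_injective W (k k' : LMap W (actdom X)) :
  act X \o k ==L act X \o k' -> aq2 X \o k ==L aq2 X \o k' -> k ==L k'.
Proof.
  intros H1 H2. destruct (bprincipal PX) as [t [T1 [T2 [s [S1 S2]]]]].
  assert (U : t \o k ==L t \o k').
  { apply (pullback_jointly_mono (kerpair_pb PX)); pointwise;
      [rewrite T1; apply H1 | rewrite T2; apply H2]. }
  pointwise. rewrite <- (S1 u), U, S1. reflexivity.
Qed.

Lemma principal_stabilizer_trivial W (k : LMap W (actdom X)) :
  act X \o k ==L aq2 X \o k -> aq1 X \o k ==L ge G \o anchor X \o aq2 X \o k.
Proof.
  intro Hfix.
  destruct (act_pair_exists (g := ge G \o anchor X \o aq2 X \o k) (x := aq2 X \o k))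
    as [k0 [K1 K2]].
  { pose proof (@gd_e G) as E. pointwise. rewrite E. reflexivity. }
  assert (Hk0 : act X \o k0 ==L aq2 X \o k0).
  { transitivity (aq2 X \o k); [| symmetry; exact K2].
    apply act_unit; [pointwise; rewrite K1; reflexivity | exact K2]. }
  assert (E : k ==L k0).
  { apply act_pair_injective; pointwise; [rewrite Hfix, Hk0, K2 | rewrite K2]; reflexivity. }
  pointwise. rewrite E, K1. reflexivity.
Qed.
End Principal.

Section EquivariantMap.
Variables (X Y : GLocale G) (M N : Locale) (PX : PrincipalBundle X M) (PY : PrincipalBundle Y N).
Variables (f : LMap (gX X) (gX Y)) (Hf : equivariant f).

Lemma equivariant_fiberwise_mono W (h h' : LMap W (gX X)) :
  bpi PX \o h ==L bpi PX \o h' -> f \o h ==L f \o h' -> h ==L h'.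
Proof.
  intros Hpi Hfh. pose proof (proj1 Hf) as Hanchor.
  destruct (principal_fiber_transitive Hpi) as [k [K1 K2]].
  destruct (act_pair_exists (X := Y) (g := aq1 X \o k) (x := f \o h')) as [kY [KY1 KY2]].
  { pose proof (proj1 (actdom_pb X)) as E. pointwise. rewrite E, K2, Hanchor. reflexivity. }
  assert (Hact : f \o act X \o k ==L act Y \o kY).
  { apply equivariant_act; [exact Hf | exact KY1 |]. pointwise. rewrite KY2, K2. reflexivity. }
  assert (HkY : aq1 Y \o kY ==L ge G \o anchor Y \o aq2 Y \o kY).
  { apply (principal_stabilizer_trivial PY). pointwise. rewrite <- Hact, K1, Hfh, KY2. reflexivity. }
  assert (Hk : act X \o k ==L aq2 X \o k).
  { apply act_unit; [| reflexivity]. pointwise. rewrite <- KY1, HkY, KY2, Hanchor, K2. reflexivity. }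
  pointwise. rewrite <- K1, Hk, K2. reflexivity.
Qed.

Lemma equivariant_fiber_lift W (y : LMap W (gX Y)) (x0 : LMap W (gX X)) :
  bpi PY \o y ==L bpi PY \o (f \o x0) ->
  exists x, f \o x ==L y /\ bpi PX \o x ==L bpi PX \o x0.
Proof.
  intro Hy. pose proof (proj1 Hf) as Hanchor.
  destruct (principal_fiber_transitive Hy) as [kY [KY1 KY2]].
  destruct (act_pair_exists (X := X) (g := aq1 Y \o kY) (x := x0)) as [kX [KX1 KX2]].
  { pose proof (proj1 (actdom_pb Y)) as E. pointwise. rewrite E, KY2, Hanchor. reflexivity. }
  exists (act X \o kX). split.
  - transitivity (act Y \o kY); [| exact KY1].
    apply equivariant_act; [exact Hf | symmetry; exact KX1 |]. pointwise. rewrite KY2, KX2. reflexivity.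
  - pose proof (bpi_inv PX) as E. pointwise. rewrite E, KX2. reflexivity.
Qed.

Lemma equivariant_bundle_pullback (phi : LMap M N) :
  bpi PY \o f ==L phi \o bpi PX -> is_pullback phi (bpi PY) (bpi PX) f.
Proof.
  intro Hphi. apply is_pullbackI; [symmetry; exact Hphi | exact equivariant_fiberwise_mono |].
  intros Q q1 q2 Hq.
  destruct (open_surjection_lift_locally q1 (bpi_opensurj PX)) as [P [p [x0 [Hp Hpx]]]].
  destruct (equivariant_fiber_lift (y := q2 \o p) (x0 := x0)) as [x1 [X1f X1pi]].
  { pointwise. rewrite <- Hq, Hpx, Hphi. reflexivity. }
  assert (X1pi' : bpi PX \o x1 ==L q1 \o p) by (pointwise; rewrite X1pi, Hpx; reflexivity).
  destruct (open_surjection_descent (x := x1) Hp) as [x Hx].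
  { intros W a b Hab. apply equivariant_fiberwise_mono; pointwise;
      [rewrite X1pi' | rewrite X1f]; rewrite Hab; reflexivity. }
  exists x. split; apply (surjection_cancel (proj2 Hp)); pointwise;
    rewrite Hx; [apply X1pi' | apply X1f].
Qed.
End EquivariantMap.
End Bundles.

(** * Cubes whose vertical faces are pullbacks *)

Section Cube.
Variables (X1 X2 X3 X4 M1 M2 M3 M4 : Locale).
Variables (gamma2 : LMap X1 X2) (gamma3 : LMap X1 X3) (delta2 : LMap X2 X4) (delta3 : LMap X3 X4).
Variables (beta2 : LMap M1 M2) (beta3 : LMap M1 M3) (alpha2 : LMap M2 M4) (alpha3 : LMap M3 M4).
Variables (pi1 : LMap X1 M1) (pi2 : LMap X2 M2) (pi3 : LMap X3 M3) (pi4 : LMap X4 M4).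
Hypothesis top_comm : delta2 \o gamma2 ==L delta3 \o gamma3.
Hypothesis pi3_gamma3 : pi3 \o gamma3 ==L beta3 \o pi1.
Hypothesis face_gamma2 : is_pullback beta2 pi2 pi1 gamma2.
Hypothesis face_delta2 : is_pullback alpha2 pi4 pi2 delta2.
Hypothesis face_delta3 : is_pullback alpha3 pi4 pi3 delta3.

Lemma top_pullback_of_base_pullback :
  is_pullback alpha2 alpha3 beta2 beta3 -> is_pullback delta2 delta3 gamma2 gamma3.
Proof.
  intro Hbase.
  pose proof (proj1 face_gamma2) as Hb2.
  pose proof (proj1 face_delta2) as Ha2.
  pose proof (proj1 face_delta3) as Ha3.
  apply is_pullbackI; [exact top_comm | |].
  - intros Q h h' E2 E3. apply (pullback_jointly_mono face_gamma2); [| exact E2].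
    apply (pullback_jointly_mono Hbase); pointwise.
    + rewrite Hb2, E2. reflexivity.
    + rewrite <- !pi3_gamma3, E3. reflexivity.
  - intros Q q2 q3 Hq.
    destruct (pullback_lift Hbase (q1 := pi2 \o q2) (q2 := pi3 \o q3)) as [m [Hm2 Hm3]].
    { pointwise. rewrite Ha2, Ha3, Hq. reflexivity. }
    destruct (pullback_lift face_gamma2 (q1 := m) (q2 := q2)) as [x [Hx1 Hx2]].
    { pointwise. rewrite Hm2. reflexivity. }
    exists x. split; [exact Hx2 |].
    apply (pullback_jointly_mono face_delta3); pointwise.
    + rewrite pi3_gamma3, Hx1, Hm3. reflexivity.
    + rewrite <- top_comm, Hx2, Hq. reflexivity.
Qed.

Hypothesis pi1_surj : is_surjection pi1.
Hypothesis pi4_open_surj : is_open_surjection pi4.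

Lemma base_comm : alpha2 \o beta2 ==L alpha3 \o beta3.
Proof.
  pose proof (proj1 face_gamma2) as Hb2.
  pose proof (proj1 face_delta2) as Ha2.
  pose proof (proj1 face_delta3) as Ha3.
  apply (surjection_cancel pi1_surj). pointwise.
  rewrite Hb2, Ha2, top_comm, <- Ha3, pi3_gamma3. reflexivity.
Qed.

Section TopPullback.
Hypothesis Htop : is_pullback delta2 delta3 gamma2 gamma3.

Lemma base_jointly_mono W (h h' : LMap W M1) :
  beta2 \o h ==L beta2 \o h' -> beta3 \o h ==L beta3 \o h' -> h ==L h'.
Proof.
  intros E2 E3.
  pose proof (proj1 face_delta2) as Ha2.
  destruct (open_surjection_lift_locally (alpha2 \o beta2 \o h) pi4_open_surj)
    as [P [p [z [[_ Hp] Hpz]]]].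
  destruct (pullback_lift face_delta2 (q1 := beta2 \o h \o p) (q2 := z)) as [x2 [Hx2 Hx2']].
  { exact Hpz. }
  destruct (pullback_lift face_gamma2 (q1 := h \o p) (q2 := x2)) as [y [Hy1 Hy2]].
  { pointwise. rewrite Hx2. reflexivity. }
  destruct (pullback_lift face_gamma2 (q1 := h' \o p) (q2 := x2)) as [y' [Hy1' Hy2']].
  { pointwise. rewrite Hx2, E2. reflexivity. }
  assert (Eyy : y ==L y').
  { apply (pullback_jointly_mono Htop); [pointwise; rewrite Hy2, Hy2'; reflexivity |].
    apply (pullback_jointly_mono face_delta3); pointwise.
    - rewrite pi3_gamma3, Hy1, Hy1', E3. reflexivity.
    - rewrite <- top_comm, Hy2, Hy2'. reflexivity. }
  apply (surjection_cancel Hp). pointwise. rewrite <- Hy1, Eyy, Hy1'. reflexivity.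
Qed.

Lemma base_pullback_of_top_pullback : is_pullback alpha2 alpha3 beta2 beta3.
Proof.
  pose proof (proj1 face_gamma2) as Hb2.
  apply is_pullbackI; [exact base_comm | exact base_jointly_mono |].
  intros Q q2 q3 Hq.
  destruct (open_surjection_lift_locally (alpha2 \o q2) pi4_open_surj) as [P [p [z [Hp Hpz]]]].
  destruct (pullback_lift face_delta2 (q1 := q2 \o p) (q2 := z)) as [x2 [Hx2 Hx2']].
  { exact Hpz. }
  destruct (pullback_lift face_delta3 (q1 := q3 \o p) (q2 := z)) as [x3 [Hx3 Hx3']].
  { pointwise. rewrite <- Hq. apply Hpz. }
  destruct (pullback_lift Htop (q1 := x2) (q2 := x3)) as [x1 [Hx12 Hx13]].
  { pointwise. rewrite Hx2', Hx3'. reflexivity. }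
  assert (Hm2 : beta2 \o pi1 \o x1 ==L q2 \o p) by (pointwise; rewrite Hb2, Hx12, Hx2; reflexivity).
  assert (Hm3 : beta3 \o pi1 \o x1 ==L q3 \o p)
    by (pointwise; rewrite <- pi3_gamma3, Hx13, Hx3; reflexivity).
  destruct (open_surjection_descent (x := pi1 \o x1) Hp) as [m Hm].
  { intros W a b Hab. apply base_jointly_mono; pointwise;
      [rewrite Hm2 | rewrite Hm3]; rewrite Hab; reflexivity. }
  exists m. split; apply (surjection_cancel (proj2 Hp)); pointwise;
    rewrite Hm; [apply Hm2 | apply Hm3].
Qed.
End TopPullback.
End Cube.

Theorem lemma3p4 (G : OpenLocGroupoid) (X1 X2 X3 X4 : GLocale G)
  (M1 M2 M3 M4 : Locale)
  (P1 : PrincipalBundle X1 M1) (P2 : PrincipalBundle X2 M2)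
  (P3 : PrincipalBundle X3 M3) (P4 : PrincipalBundle X4 M4)
  (gamma2 : LMap (gX X1) (gX X2)) (gamma3 : LMap (gX X1) (gX X3))
  (delta2 : LMap (gX X2) (gX X4)) (delta3 : LMap (gX X3) (gX X4))
  (Hg2 : equivariant gamma2) (Hg3 : equivariant gamma3)
  (Hd2 : equivariant delta2) (Hd3 : equivariant delta3)
  (Hcomm : delta2 \o gamma2 ==L delta3 \o gamma3)
  (beta2 : LMap M1 M2) (beta3 : LMap M1 M3)
  (alpha2 : LMap M2 M4) (alpha3 : LMap M3 M4)
  (Hb2 : bpi P2 \o gamma2 ==L beta2 \o bpi P1)
  (Hb3 : bpi P3 \o gamma3 ==L beta3 \o bpi P1)
  (Ha2 : bpi P4 \o delta2 ==L alpha2 \o bpi P2)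
  (Ha3 : bpi P4 \o delta3 ==L alpha3 \o bpi P3) :
  is_pullback delta2 delta3 gamma2 gamma3 <->
  is_pullback alpha2 alpha3 beta2 beta3.
Proof.
  pose proof (equivariant_bundle_pullback Hg2 Hb2) as face_gamma2.
  pose proof (equivariant_bundle_pullback Hd2 Ha2) as face_delta2.
  pose proof (equivariant_bundle_pullback Hd3 Ha3) as face_delta3.
  split.
  - apply (base_pullback_of_top_pullback Hcomm Hb3 face_gamma2 face_delta2 face_delta3).
    + exact (proj2 (bpi_opensurj P1)).
    + exact (bpi_opensurj P4).
  - exact (top_pullback_of_base_pullback Hcomm Hb3 face_gamma2 face_delta2 face_delta3).
Qed.
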